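(* Let $\mathcal{T}$ be a projective Fraïssé family of finite trees whose distinguished epimorphisms are monotone and which allows splitting edges. Let $\mathbb{G}$ be its projective Fraïssé limit and $\pi\colon\mathbb{G}\to|\mathbb{G}|$ its topological realization. If $p\in|\mathbb{G}|$ is a ramification point of the dendrite $|\mathbb{G}|$, then there is a unique $p'\in\mathbb{G}$ with $\pi(p')=p$.
   Context: Graphs have reflexive symmetric edge relations; topological graphs carry a compact, Hausdorff, zero-dimensional, second countable topology with closed edge set; finite graphs are discrete. An epimorphism $g\colon B\to A$ of topological graphs is a continuous surjection with: $\langle a_1,a_2\rangle\in E(A)$ iff some $b_i\in g^{-1}(a_i)$ satisfy $\langle b_1,b_2\rangle\in E(B)$. A topological graph is disconnected if its vertex set splits into two nonempty disjoint closed sets with no edges between them, and connected otherwise (subsets carry the induced edges and subspace topology). An epimorphism is monotone if every fibre $g^{-1}(a)$ is connected. A finite tree is a finite connected graph without cycles of nontrivial edges. A projective Fraïssé family is a class of finite graphs with a distinguished class of epimorphisms, countably many up to isomorphism, containing identities, closed under composition, with the joint projection property (any $A,B$ have a common $C$ with distinguished epimorphisms onto both) and projective amalgamation (distinguished $f\colon B\to A$, $g\colon C\to A$ admit $D$ and distinguished $h\colon D\to B$, $k\colon D\to C$ with $f\circ h=g\circ k$). A Fraïssé sequence is a sequence $(F_n)$ in the family with compatible distinguished epimorphisms $f^m_n\colon F_m\to F_n$ such that every member of the family is the image of some $F_n$ under a distinguished epimorphism, and for every distinguished $f\colon A\to F_m$ there exist $n\ge m$ and distinguished $g\colon F_n\to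 A$ with $f\circ g=f^n_m$; the projective Fraïssé limit is $\varprojlim F_n\subseteq\prod F_n$ with $\langle x,y\rangle$ an edge iff $\langle x_n,y_n\rangle$ is an edge for all $n$ (unique up to isomorphism). The family allows splitting edges if for every member $G$ and every nontrivial edge $\{a,b\}$, the graph obtained by replacing this edge by a path $a,\ast,b$ through a new vertex $\ast$ is in the family, and both maps collapsing $\ast$ to $a$, resp. to $b$ (identity elsewhere) are distinguished epimorphisms. Under these hypotheses the limit $\mathbb{G}$ is a prespace (its edge relation is an equivalence relation); its topological realization is the quotient map $\pi\colon\mathbb{G}\to|\mathbb{G}|=\mathbb{G}/E(\mathbb{G})$, and $|\mathbb{G}|$ is a dendrite (a compact metrizable connected locally connected space in which any two points are joined by a unique arc). A point $x$ of a dendrite $X$ is a ramification point if $X\setminus\{x\}$ has more than two connected components. *)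

From HB Require Import structures.
From Stdlib Require Import Relations.
From mathcomp Require Import all_boot all_order.
From mathcomp Require Import all_classical.
From mathcomp Require Import topology_structure connected.

Set Implicit Arguments.
Unset Strict Implicit.
Unset Printing Implicit Defensive.


(** * Finite graphs: reflexive symmetric edge relation on a finite vertex set
      (finite graphs carry the discrete topology, so every map is continuous). *)
Record FinGraph := FGraph {
  fv : finType;
  fe : rel fv;
  fe_refl : reflexive fe;
  fe_sym : symmetric fe }.

Definition epimorphism (B A : FinGraph) (f : fv B -> fv A) : Prop :=
  (forall a : fv A, exists b : fv B, f b = a) /\
  (forall a1 a2 : fv A, @fe A a1 a2 <->
     exists b1 b2 : fv B, [/\ f b1 = a1, f b2 = a2 & @fe B b1 b2]).

Definition fg_connected (G : FinGraph) (S : {set fv G}) : Prop :=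
  ~ exists U W : {set fv G},
      [/\ (U :|: W = S)%SET, [disjoint U & W], (0 < #|U|)%N, (0 < #|W|)%N &
          forall u w, u \in U -> w \in W -> ~~ @fe G u w].

Definition monotone (B A : FinGraph) (f : fv B -> fv A) : Prop :=
  forall a : fv A, fg_connected [set b | f b == a]%SET.

Definition acyclic (G : FinGraph) : Prop :=
  ~ exists s : seq (fv G), [/\ (2 < size s)%N, uniq s & cycle (@fe G) s].

Definition ftree (G : FinGraph) : Prop := fg_connected [set: fv G]%SET /\ acyclic G.

Definition fg_iso (B A : FinGraph) (f : fv B -> fv A) : Prop :=
  bijective f /\ forall x y, @fe A (f x) (f y) = @fe B x y.

Record proj_fraisse_family (T : FinGraph -> Prop)
    (D : forall B A : FinGraph, (fv B -> fv A) -> Prop) : Prop := {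
  pff_epi : forall B A f, D B A f -> [/\ T B, T A & @epimorphism B A f];
  pff_countable : exists e : nat -> FinGraph,
      forall A, T A -> exists n (f : fv (e n) -> fv A), fg_iso f;
  pff_id : forall A, T A -> D A A id;
  pff_comp : forall C B A (f : fv B -> fv A) (g : fv C -> fv B),
      D B A f -> D C B g -> D C A (f \o g);
  pff_jpp : forall A B, T A -> T B ->
      exists C (f : fv C -> fv A) (g : fv C -> fv B), D C A f /\ D C B g;
  pff_amalg : forall A B C (f : fv B -> fv A) (g : fv C -> fv A),
      D B A f -> D C A g ->
      exists E (h : fv E -> fv B) (k : fv E -> fv C),
        [/\ D E B h, D E C k & forall x, f (h x) = g (k x)] }.

(** * Splitting an edge {a,b}: new vertex None, path a, None, b. *)
Section Split.
Variables (G : FinGraph) (a b : fv G).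

Definition split_e (x y : option (fv G)) : bool :=
  match x, y with
  | Some u, Some v =>
      @fe G u v && ((u == v) || ~~ (((u == a) && (v == b)) || ((u == b) && (v == a))))
  | None, None => true
  | None, Some v => (v == a) || (v == b)
  | Some v, None => (v == a) || (v == b)
  end.

Lemma split_e_refl : reflexive split_e.
Proof. by case=> [u|] //=; rewrite fe_refl eqxx. Qed.

Lemma split_e_sym : symmetric split_e.
Proof.
case=> [u|] [v|] //=; rewrite fe_sym [v == u]eq_sym; congr (_ && (_ || ~~ _)).
by case: (u == a); case: (v == b); case: (u == b); case: (v == a).
Qed.

Definition split_graph : FinGraph :=
  @FGraph (option (fv G)) split_e split_e_refl split_e_sym.

Definition collapse (c : fv G) (x : fv split_graph) : fv G :=
  if x is Some v then v else c.
End Split.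

Definition allows_splitting (T : FinGraph -> Prop)
    (D : forall B A : FinGraph, (fv B -> fv A) -> Prop) : Prop :=
  forall G, T G -> forall a b : fv G, a != b -> @fe G a b ->
    [/\ T (split_graph a b), D (split_graph a b) G (@collapse G a b a)
        & D (split_graph a b) G (@collapse G a b b)].

Fixpoint fcomp (F : nat -> FinGraph) (g : forall n, fv (F n.+1) -> fv (F n))
    (m k : nat) : fv (F (k + m)%coq_nat) -> fv (F m) :=
  match k return fv (F (k + m)%coq_nat) -> fv (F m) with
  | 0 => fun x => x
  | k'.+1 => fun x => @fcomp F g m k' (g (k' + m)%coq_nat x)
  end.

Record fraisse_seq (T : FinGraph -> Prop)
    (D : forall B A : FinGraph, (fv B -> fv A) -> Prop)
    (F : nat -> FinGraph) (g : forall n, fv (F n.+1) -> fv (F n)) : Prop := {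
  fs_mem : forall n, T (F n);
  fs_dist : forall n, D (F n.+1) (F n) (g n);
  fs_univ : forall A, T A -> exists n (h : fv (F n) -> fv A), D (F n) A h;
  fs_proj : forall m A (f : fv A -> fv (F m)), D A (F m) f ->
      exists k (h : fv (F (k + m)%coq_nat) -> fv A),
        D (F (k + m)%coq_nat) A h /\ forall x, f (h x) = @fcomp F g m k x }.

Local Open Scope classical_set_scope.
Section Limit.
Variables (F : nat -> FinGraph) (g : forall n, fv (F n.+1) -> fv (F n)).

Definition thread : Type :=
  {x : forall n, fv (F n) | forall n, @g n (x n.+1) = x n}.

HB.instance Definition _ := gen_eqMixin thread.
HB.instance Definition _ := gen_choiceMixin thread.

(** product topology (of discrete spaces) restricted to the threads *)
Definition thread_open (U : set thread) : Prop :=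
  forall x, U x -> exists n, forall y : thread,
    (forall i, (i < n)%N -> proj1_sig y i = proj1_sig x i) -> U y.

Lemma thread_openT : thread_open setT.
Proof. by move=> x _; exists 0%N. Qed.

Lemma thread_openI : setI_closed thread_open.
Proof.
move=> U V oU oV x [Ux Vx].
have [n Hn] := oU x Ux; have [m Hm] := oV x Vx.
exists (maxn n m) => y Hy; split.
- by apply: Hn => i lt; apply: Hy; rewrite leq_max lt.
- by apply: Hm => i lt; apply: Hy; rewrite leq_max lt orbT.
Qed.

Lemma thread_open_bigU (I : Type) (f : I -> set thread) :
  (forall i, thread_open (f i)) -> thread_open (\bigcup_i f i).
Proof.
move=> oF x [i _ fxi]; have [n Hn] := oF i x fxi.
by exists n => y Hy; exists i => //; apply: Hn.
Qed.

HB.instance Definition _ :=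
  isOpenTopological.Build thread thread_openT thread_openI thread_open_bigU.

Definition lim_edge (x y : thread) : Prop :=
  forall n, @fe (F n) (proj1_sig x n) (proj1_sig y n).

(** equivalence relation generated by the edge relation (the edge relation
    itself, since the limit is a prespace) *)
Definition lim_equiv : relation thread := clos_refl_sym_trans thread lim_edge.

Definition realization : Type :=
  {S : set thread | exists x, S = [set y | lim_equiv x y]}.

HB.instance Definition _ := gen_eqMixin realization.
HB.instance Definition _ := gen_choiceMixin realization.

Definition realize (x : thread) : realization :=
  exist _ [set y | lim_equiv x y] (ex_intro _ x erefl).

Definition real_open (U : set realization) : Prop := open (realize @^-1` U).

Lemma real_openT : real_open setT.
Proof. by rewrite /real_open preimage_setT; exact: openT. Qed.

Lemma real_openI : setI_closed real_open.
Proof. by move=> U V oU oV; rewrite /real_open preimage_setI; exact: openI. Qed.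

Lemma real_open_bigU (I : Type) (f : I -> set realization) :
  (forall i, real_open (f i)) -> real_open (\bigcup_i f i).
Proof. by move=> oF; rewrite /real_open preimage_bigcup; apply: bigcup_open => i _; exact: oF. Qed.

HB.instance Definition _ :=
  isOpenTopological.Build realization real_openT real_openI real_open_bigU.
End Limit.

Definition ramification_point (X : topologicalType) (p : X) : Prop :=
  exists a b c : X,
    [/\ (~` [set p]) a, (~` [set p]) b & (~` [set p]) c] /\
    [/\ ~ connected_component (~` [set p]) a b,
        ~ connected_component (~` [set p]) a c &
        ~ connected_component (~` [set p]) b c].

(* If the fibre of p contained two threads, it would contain an edge {x, y}
   with x <> y.  Splitting the edge {x_n, y_n} of a level F_n and lifting the
   collapse onto F_n back into the Fraisse sequence gives a monotone
   epimorphism h from some F_M onto the split tree sending x_M to the new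
   vertex; hence x has no neighbour besides y, and the fibre is exactly {x, y}.
   Deleting the new vertex leaves two sides of the split tree, and the threads
   lying over one side form a connected subset of |G| \ {p}: preimages of
   connected sets under monotone epimorphisms are connected, and a clopen set
   of threads is decided at a finite level by compactness.  So |G| \ {p} has
   at most two components. *)

From HB Require Import structures.
From Stdlib Require Import Relations Eqdep_dec PeanoNat.
From mathcomp Require Import all_boot all_order.
From mathcomp Require Import all_classical.
From mathcomp Require Import topology_structure connected.

Set Implicit Arguments.
Unset Strict Implicit.
Unset Printing Implicit Defensive.

Lemma dependent_choice_seq (X : nat -> Type) (P : forall n, X n -> Prop)
    (R : forall n, X n.+1 -> X n -> Prop) :
  (exists x0, P 0 x0) ->
  (forall n x, P n x -> exists2 y, P n.+1 y & R n y x) ->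
  exists x : forall n, X n, forall n, P n (x n) /\ R n (x n.+1) (x n).
Proof.
move=> [x0 Px0] ext.
have next n (s : {x | P n x}) : {y | P n.+1 y & R n y (sval s)}.
  by case: s => x Px; apply: cid2; exact: ext.
pose fix xs n : {x | P n x} :=
  if n is n'.+1 then exist _ (s2val (next n' (xs n'))) (s2valP (next n' (xs n')))
  else exist _ x0 Px0.
exists (fun n => sval (xs n)) => n; split; first exact: svalP.
exact: s2valP' (next n (xs n)).
Qed.

Lemma infinite_pigeonhole (T : finType) (Q : nat -> Prop) (f : nat -> T) :
  (forall M, exists2 K, (M <= K)%N & Q K) ->
  exists t, forall M, exists K, [/\ (M <= K)%N, Q K & f K = t].
Proof.
move=> Qinf; apply: contrapT => /forallNP finite_hits.
have /choice [bound bound_spec] : forall t, exists M : nat,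
    forall K, (M <= K)%N -> Q K -> f K <> t.
  move=> t; apply: contrapT => /forallNP unbounded; apply: (finite_hits t) => M.
  have /existsNP [K /not_implyP [MK /not_implyP [QK /contrapT fKt]]] := unbounded M.
  by exists K.
have [K MK QK] := Qinf (\max_(t : T) bound t).
by apply: (bound_spec (f K) K) => //; apply: leq_trans MK; exact: leq_bigmax.
Qed.

Section InverseSystem.
Variables (X : nat -> Type) (h : forall n, X n.+1 -> X n).

(* Points of all levels live in one sigma type, so that "the image of v at
   level n" can be stated without casting along N - n + n = N. *)
Definition step_down (s : {n & X n}) : {n & X n} :=
  let: existT n x := s in
  match n return X n -> {n & X n} with
  | 0 => fun x => existT X 0 x
  | n'.+1 => fun x => existT X n' (h x)
  end x.

Lemma level_iter_step_down k s : projT1 (iter k step_down s) = projT1 s - k.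
Proof.
elim: k => [|k IH]; first by rewrite subn0.
by rewrite iterS subnS -IH; case: (iter k step_down s) => [[|n] x].
Qed.

Lemma existT_level_inj n (x y : X n) : existT X n x = existT X n y -> x = y.
Proof. exact: (Eqdep_dec.inj_pair2_eq_dec _ Nat.eq_dec X). Qed.

Lemma inverse_system_point (h_onto : forall n (y : X n), exists x, h x = y)
    N (v : X N) :
  exists x : forall n, X n, (forall n, h (x n.+1) = x n) /\ x N = v.
Proof.
pose proj_v n (a : X n) :=
  (n <= N)%N -> iter (N - n) step_down (existT X N v) = existT X n a.
have at_level n : (n <= N)%N -> exists a, proj_v n a.
  move=> nN; have := level_iter_step_down (N - n) (existT X N v).
  case E: (iter _ _ _) => [k a] /=; rewrite subKn // => Ek; subst k.
  by exists a.
have [x Hx] : exists x : forall n, X n, forall n, proj_v n (x n) /\ h (x n.+1) = x n.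
  apply: (@dependent_choice_seq X proj_v (fun n y x => h y = x)).
    exact: at_level.
  move=> n a proj_v_a; have [ltnN|leNn] := ltnP n N; last first.
    have [a' <-] := h_onto n a; exists a' => // SnN.
    by have := leq_trans SnN leNn; rewrite ltnn.
  have [a' proj_v_a'] := at_level n.+1 ltnN; exists a' => //.
  apply: existT_level_inj; rewrite -proj_v_a ?(ltnW ltnN) //.
  by rewrite -subnSK // iterS proj_v_a'.
exists x; split=> [n|]; first by case: (Hx n).
by apply: existT_level_inj; have [<-] := Hx N; rewrite ?subnn.
Qed.

End InverseSystem.

Lemma epimorphism_edge (B A : FinGraph) (f : fv B -> fv A) : epimorphism f ->
  forall b1 b2, fe b1 b2 -> fe (f b1) (f b2).
Proof. by move=> [_ fE] b1 b2 e; apply/fE; exists b1, b2. Qed.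

Lemma disjoint_setP (T : finType) (A B : {set T}) :
  (forall x, x \in A -> x \in B -> False) -> [disjoint A & B].
Proof.
move=> AB; rewrite finset.disjoints_subset; apply/fintype.subsetP => x /AB xB.
by rewrite inE; apply/negP.
Qed.

Lemma fg_connected_preimage (B A : FinGraph) (f : fv B -> fv A) :
  epimorphism f -> monotone f ->
  forall Q : {set fv A}, fg_connected Q -> fg_connected [set b | f b \in Q].
Proof.
move=> [f_onto fE] f_mono Q cQ [U [W [UW dUW U0 W0 noUW]]].
have inUW b : (b \in U) || (b \in W) = (f b \in Q).
  by rewrite -finset.in_setU UW inE.
have fibres_split u w : u \in U -> w \in W -> f u <> f w.
  move=> uU wW fuw; apply: (f_mono (f u)).
  exists [set b in U | f b == f u], [set b in W | f b == f u]; split.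
  - apply/setP => b; rewrite !inE.
    have [fbu|] := eqVneq (f b) (f u); last by rewrite !andbF.
    by rewrite !andbT inUW fbu -(inUW u) uU.
  - by apply: disjoint_setP => b; rewrite !inE => /andP [/(disjointFr dUW) ->].
  - by apply/card_gt0P; exists u; rewrite !inE uU eqxx.
  - by apply/card_gt0P; exists w; rewrite !inE wW fuw eqxx.
  - by move=> b1 b2; rewrite !inE => /andP [b1U _] /andP [b2W _]; exact: noUW.
apply: cQ; exists (f @: U), (f @: W); split.
- apply/setP => q; rewrite finset.in_setU; apply/idP/idP.
    by case/orP => /imsetP [b bU ->]; rewrite -inUW bU ?orbT.
  move=> qQ; have [b fbq] := f_onto q; rewrite -fbq -inUW in qQ.
  by rewrite -fbq; case/orP: qQ => H; rewrite (imset_f f H) ?orbT.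
- by apply: disjoint_setP => q /imsetP [u uU ->] /imsetP [w wW]; exact: fibres_split.
- by have /card_gt0P [u uU] := U0; apply/card_gt0P; exists (f u); exact: imset_f.
- by have /card_gt0P [w wW] := W0; apply/card_gt0P; exists (f w); exact: imset_f.
- move=> q1 q2 /imsetP [u uU ->] /imsetP [w wW ->]; apply/negP.
  move=> /fE [b1 [b2 [fb1 fb2 e12]]].
  have /orP [b1U|b1W] : (b1 \in U) || (b1 \in W) by rewrite inUW fb1 -inUW uU.
    have /orP [b2U|b2W] : (b2 \in U) || (b2 \in W) by rewrite inUW fb2 -inUW wW orbT.
      by apply: (fibres_split b2 w) => //; rewrite fb2.
    by move: (noUW _ _ b1U b2W); rewrite e12.
  by apply: (fibres_split u b1) => //; rewrite fb1.
Qed.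

Lemma fg_connected_connect (G : FinGraph) (r : rel (fv G)) (s0 : fv G) :
  subrel r (@fe G) -> fg_connected [set t | connect r s0 t].
Proof.
move=> r_fe [U [W [UW dUW U0 W0 noUW]]].
have inS t : connect r s0 t = (t \in U) || (t \in W).
  by rewrite -finset.in_setU UW inE.
wlog s0U : U W UW dUW U0 W0 noUW inS / s0 \in U => [wlog|].
  have := inS s0; rewrite connect0 => /esym /orP [s0U|s0W]; first exact: (wlog U W).
  apply: (wlog W U) => //; first by rewrite finset.setUC.
  - by rewrite disjoint_sym.
  - by move=> w u wW uU; rewrite fe_sym; exact: noUW.
  - by move=> t; rewrite inS orbC.
have /card_gt0P [w wW] := W0.
suff : w \in U by rewrite (disjointFl dUW wW).
suff in_U x p : x \in U -> connect r s0 x -> path r x p -> w = last x p -> w \in U.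
  have /connectP [p] : connect r s0 w by rewrite inS wW orbT.
  exact: in_U s0U (connect0 r s0).
elim: p x => [|y p IH] x xU s0x /=; first by move=> _ ->.
case/andP => rxy; have s0y : connect r s0 y := connect_trans s0x (connect1 rxy).
apply: (IH y) => //; have := inS y; rewrite s0y => /esym /orP [//|yW].
by move: (noUW x y xU yW); rewrite r_fe.
Qed.

Section SplitSides.
Variables (G : FinGraph) (a b : fv G).

Definition split_e_old (s t : option (fv G)) : bool :=
  [&& s != None, t != None & split_e a b s t].

Lemma split_e_old_sym : symmetric split_e_old.
Proof. by move=> s t; rewrite /split_e_old split_e_sym andbCA andbA. Qed.

Lemma split_e_oldW : subrel split_e_old (split_e a b).
Proof. by move=> s t /and3P []. Qed.

Lemma connect_split_e_old_None s : connect split_e_old s None -> s = None.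
Proof.
case/connectP => p; case/lastP: p => [_ -> //|p t].
by rewrite rcons_path last_rcons => /andP [_ /and3P [_ tN _]] tE; rewrite -tE in tN.
Qed.

Lemma path_split_e_old_None s p : path split_e_old s p -> None \notin p.
Proof.
elim: p s => //= t p IH s /andP [/and3P [_ tN _] /IH pN].
by rewrite in_cons negb_or eq_sym tN.
Qed.

Lemma split_e_old_cover : fg_connected [set: fv (split_graph a b)] ->
  forall v, connect split_e_old (Some v) (Some a) || connect split_e_old (Some v) (Some b).
Proof.
move=> cS v; apply/idPn => v_far; apply: cS.
pose near_ab t :=
  [|| t == None, connect split_e_old t (Some a) | connect split_e_old t (Some b)].
exists [set t | near_ab t], [set t | ~~ near_ab t]; split.
- by apply/setP => t; rewrite !inE orbN.
- by apply: disjoint_setP => t; rewrite !inE => ->.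
- by apply/card_gt0P; exists None; rewrite inE /near_ab eqxx.
- by apply/card_gt0P; exists (Some v); rewrite inE.
move=> s [w|]; rewrite !inE /near_ab ?eqxx //= => s_ab w_far; apply/negP => e.
case: s s_ab e => [u|] /= s_ab e; last first.
  by case/orP: e w_far => /eqP ->; rewrite connect0 ?orbT.
have ewu : split_e_old (Some w) (Some u) by rewrite split_e_old_sym /split_e_old.
case/orP: s_ab w_far => [ua|ub]; apply/negP/negPn.
  by rewrite (connect_trans (connect1 ewu) ua).
by rewrite (connect_trans (connect1 ewu) ub) orbT.
Qed.

Lemma split_e_old_separated : acyclic (split_graph a b) -> a != b ->
  ~~ connect split_e_old (Some a) (Some b).
Proof.
move=> acyc ab; apply/negP => /connectP [p p_path p_last].
case: (shortenP p_path) p_last => q q_path q_uniq _ q_last.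
apply: acyc; exists [:: None, Some a & q]; split.
- by case: q {q_path q_uniq} q_last => //= [[ba]]; rewrite ba eqxx in ab.
- by rewrite cons_uniq q_uniq andbT in_cons /= (path_split_e_old_None q_path).
rewrite /cycle rcons_cons /= eqxx /= rcons_path -q_last /= eqxx orbT andbT.
by apply: sub_path q_path; exact: split_e_oldW.
Qed.

End SplitSides.

Lemma split_e_old_swap (G : FinGraph) (a b : fv G) :
  split_e_old a b =2 split_e_old b a.
Proof. by move=> [u|] [v|] //; rewrite /split_e_old /= [X in ~~ X]orbC. Qed.

Local Open Scope classical_set_scope.

Section Threads.
Variables (F : nat -> FinGraph) (g : forall n, fv (F n.+1) -> fv (F n)).

Definition coord (z : thread g) n : fv (F n) := proj1_sig z n.

Lemma coordP (z : thread g) n : g (coord z n.+1) = coord z n.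
Proof. exact: (proj2_sig z n). Qed.

Lemma thread_inj (z z' : thread g) : (forall n, coord z n = coord z' n) -> z = z'.
Proof.
by case: z z' => [z hz] [z' hz'] E; apply: eq_exist; exact: functional_extensionality_dep.
Qed.

Lemma coord_eq_le (z z' : thread g) N : coord z N = coord z' N ->
  forall i, (i <= N)%N -> coord z i = coord z' i.
Proof.
elim: N => [E i|N IH E i]; first by rewrite leqn0 => /eqP ->.
rewrite leq_eqVlt => /orP [/eqP -> //|]; rewrite ltnS; apply: IH.
by rewrite -coordP E coordP.
Qed.

Lemma coord_neq_near (z z' : thread g) : z <> z' ->
  \forall n \near \oo, coord z n != coord z' n.
Proof.
move=> zz'; have [i /eqP zz'_i] : exists i, coord z i <> coord z' i.
  apply: contrapT => /forallNP same; apply: zz'; apply: thread_inj => i.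
  exact: contrapT (same i).
exists i => // n /= le_in; apply: contra_neq zz'_i => E.
exact: coord_eq_le E i le_in.
Qed.

Lemma fcomp_coord (z : thread g) m k :
  @fcomp F g m k (coord z (k + m)%coq_nat) = coord z m.
Proof. by elim: k => //= k <-; rewrite coordP. Qed.

Lemma lim_edge_sym (x y : thread g) : lim_edge x y -> lim_edge y x.
Proof. by move=> exy n; rewrite fe_sym. Qed.

Lemma realizeP (x y : thread g) : realize x = realize y <-> lim_equiv x y.
Proof.
split=> [/(congr1 (fun S => sval S y)) /= ->|exy]; first exact: rst_refl.
apply: eq_exist; rewrite funeqE => z /=; apply: propext.
by split; apply: rst_trans; [apply: rst_sym|].
Qed.

Lemma realize_surj (p : realization g) : exists x, realize x = p.
Proof. by case: p => S [x Sx]; exists x; apply: eq_exist. Qed.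

Lemma lim_equiv_nontrivial_edge (u v : thread g) : lim_equiv u v -> u <> v ->
  exists x y, [/\ x <> y, lim_edge x y & lim_equiv u x].
Proof.
elim=> {u v} [u v euv uv| // |u v euv IH vu|u v w _ IHuv _ IHvw uw].
- by exists u, v; split=> //; exact: rst_refl.
- have [x [y [xy exy ux]]] := IH (nesym vu).
  by exists x, y; split=> //; apply: rst_trans ux; exact: rst_sym.
- have [uv|uv] := pselect (u = v); first by subst v; exact: IHvw.
  by have [x [y [xy exy ux]]] := IHuv uv; exists x, y.
Qed.

Lemma clopen_thread_level (U : set (thread g)) : open U -> open (~` U) ->
  exists N, forall z z', coord z N = coord z' N -> U z -> U z'.
Proof.
move=> oU oUc; apply: contrapT => /forallNP no_level.
have /choice [s s_split] : forall N, exists zz : thread g * thread g,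
    [/\ coord zz.1 N = coord zz.2 N, U zz.1 & ~ U zz.2].
  move=> N; have /existsNP [z /existsNP [z' /not_implyP [E /not_implyP [Uz nUz']]]] :=
    no_level N.
  by exists (z, z').
pose often n (v : fv (F n)) := forall M, exists2 K, (M <= K)%N & coord (s K).1 n = v.
(* Konig's lemma: a thread each of whose coordinates is shared by infinitely
   many of the (s K).1. *)
have [w w_spec] : exists w : forall n, fv (F n),
    forall n, often n (w n) /\ g (w n.+1) = w n.
  apply: (@dependent_choice_seq _ often (fun n v' v => g v' = v)).
    have [v v_often] := @infinite_pigeonhole _ (fun _ => True) (fun K => coord (s K).1 0)
      (fun M => ex_intro2 _ _ M (leqnn M) I).
    by exists v => M; have [K [MK _ E]] := v_often M; exists K.
  move=> n v often_v.
  have [v' v'_often] := infinite_pigeonhole (fun K => coord (s K).1 n.+1) often_v.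
  exists v' => [M|]; first by have [K [MK _ E]] := v'_often M; exists K.
  by have [K [_ <- <-]] := v'_often 0; rewrite coordP.
pose wt : thread g := exist _ w (fun n => (w_spec n).2).
have close n K (y : thread g) : (n <= K)%N -> coord (s K).1 K = coord y K ->
    coord (s K).1 n = coord wt n -> forall i, (i < n)%N -> coord y i = coord wt i.
  move=> nK E1 E2 i ltin; have lein := ltnW ltin.
  by rewrite -(coord_eq_le E1 (leq_trans lein nK)) (coord_eq_le E2 lein).
have [Uw|nUw] := pselect (U wt).
  have [n Hn] := oU wt Uw; have [K nK EK] := (w_spec n).1 n.
  have [E _ nU] := s_split K; apply: nU; apply: Hn.
  exact: (close n K _ nK E EK).
have [n Hn] := oUc wt nUw; have [K nK EK] := (w_spec n).1 n.
have [E U1 _] := s_split K; apply: (Hn (s K).1) U1.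
exact: (close n K _ nK erefl EK).
Qed.

Lemma open_cylinder m (P : fv (F m) -> Prop) : open [set z : thread g | P (coord z m)].
Proof. by move=> z Pz; exists m.+1 => y Hy; rewrite /= /coord Hy. Qed.

Section EpimorphicBonds.
Hypothesis bond_epi : forall n, epimorphism (@g n).

Lemma lift_edge N (v1 v2 : fv (F N)) : fe v1 v2 ->
  exists z1 z2 : thread g, [/\ lim_edge z1 z2, coord z1 N = v1 & coord z2 N = v2].
Proof.
move=> e12; pose X n := {ab : fv (F n) * fv (F n) | fe ab.1 ab.2}.
pose h n (s : X n.+1) : X n :=
  exist _ (g (sval s).1, g (sval s).2) (epimorphism_edge (bond_epi n) (svalP s)).
have h_onto n (s : X n) : exists s', h n s' = s.
  case: s => [[a b] eab].
  have [a' [b' [ga gb e']]] := proj1 ((bond_epi n).2 a b) eab.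
  by exists (exist _ (a', b') e'); apply: val_inj; rewrite /= ga gb.
have [x [hx xN]] := inverse_system_point h_onto (exist _ (v1, v2) e12 : X N).
have thread1 n : g (sval (x n.+1)).1 = (sval (x n)).1 by rewrite -(hx n).
have thread2 n : g (sval (x n.+1)).2 = (sval (x n)).2 by rewrite -(hx n).
exists (exist _ _ thread1), (exist _ _ thread2).
by split=> [n||]; rewrite /coord /= ?xN //; exact: svalP (x n).
Qed.

Hypothesis fcomp_epi_monotone :
  forall m k, epimorphism (@fcomp F g m k) /\ monotone (@fcomp F g m k).

Lemma connected_realize_cylinder m (Q : {set fv (F m)}) : fg_connected Q ->
  connected (@realize F g @` [set z : thread g | coord z m \in Q]).
Proof.
move=> cQ B [r0 Br0] [O oO BO] [C cC BC]; apply: contrapT => BnIm.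
set K := [set z | _] in BO BC BnIm *.
have [w Kw nBw] : exists2 w, K w & ~ B (realize w).
  apply: contrapT => /forall2NP far; apply: BnIm; apply/seteqP; split.
    by rewrite BO => r [].
  move=> _ [z Kz <-]; apply: contrapT => nB.
  by have [|] := far z.
pose U := [set z | K z /\ O (realize z)].
have B_C z : K z -> B (realize z) <-> C (realize z).
  by move=> Kz; rewrite BC; split=> [[]|] //; split=> //; exists z.
have oUc : open (~` U).
  have -> : ~` U = ~` K `|` @realize F g @^-1` (~` C).
    apply/seteqP; split=> z /=.
      move/not_andP => [|nO]; first by left.
      have [Kz|] := pselect (K z); last by left.
      by right => Cz; apply: nO; have := (B_C z Kz).2 Cz; rewrite BO => -[].
    case=> [nK [] //|nC [Kz Oz]]; apply: nC; apply/(B_C z Kz).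
    by rewrite BO; split=> //; exists z.
  apply: openU; first exact: (@open_cylinder m (fun v => ~ v \in Q)).
  exact: closed_openC cC.
have oU : open U := openI (@open_cylinder m (fun v => v \in Q)) oO.
have [N lvlN] := clopen_thread_level oU oUc.
have lvl z z' : coord z (N + m)%coq_nat = coord z' (N + m)%coq_nat -> U z -> U z'.
  by move=> E; apply: lvlN; exact: coord_eq_le E _ (leq_addr m N).
have [f_epi f_mono] := fcomp_epi_monotone m N.
pose hit v := `[< exists2 z, U z & coord z (N + m)%coq_nat = v >].
apply: (fg_connected_preimage f_epi f_mono cQ).
exists [set v in [set v | @fcomp F g m N v \in Q] | hit v]%SET,
       [set v in [set v | @fcomp F g m N v \in Q] | ~~ hit v]%SET; split.
- by apply/setP => v; rewrite !inE -andb_orr orbN andbT.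
- by apply: disjoint_setP => v; rewrite !inE => /andP [_ ->] /andP [].
- move: Br0; rewrite {1}BO => -[[z Kz <-] Oz].
  apply/card_gt0P; exists (coord z (N + m)%coq_nat).
  by rewrite !inE fcomp_coord Kz; apply/asboolP; exists z.
- apply/card_gt0P; exists (coord w (N + m)%coq_nat).
  rewrite !inE fcomp_coord Kw; apply/negP => /asboolP [z Uz Ez]; apply: nBw.
  by have [_ Ow] := lvl z w Ez Uz; rewrite BO; split=> //; exists w.
move=> v1 v2; rewrite !inE => /andP [_ /asboolP [z Uz <-]] /andP [Qv2 /negP not_hit].
apply/negP => /lift_edge [z1 [z2 [e12 E1 E2]]].
have [_ O1] : U z1 by apply: (lvl z) => //; rewrite E1.
have R12 : realize z1 = realize z2 by apply/realizeP; exact: rst_step.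
apply: not_hit; apply/asboolP; exists z2 => //; split; last by rewrite -R12.
by rewrite /K /= -(fcomp_coord z2 m N) E2.
Qed.

End EpimorphicBonds.
End Threads.

Section FraisseLimit.
Variables (T : FinGraph -> Prop) (D : forall B A : FinGraph, (fv B -> fv A) -> Prop)
  (F : nat -> FinGraph) (g : forall n, fv (F n.+1) -> fv (F n)).
Hypotheses (family : proj_fraisse_family T D) (trees : forall A, T A -> ftree A)
  (D_monotone : forall B A f, @D B A f -> monotone f)
  (splitting : allows_splitting T D) (seqF : fraisse_seq T D g).

Lemma D_fcomp m k : @D (F (k + m)%coq_nat) (F m) (@fcomp F g m k).
Proof.
elim: k => [|k IH]; first exact: (pff_id family (fs_mem seqF m)).
exact: (pff_comp family IH (fs_dist seqF (k + m)%coq_nat)).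
Qed.

Lemma fcomp_epi_monotone m k :
  epimorphism (@fcomp F g m k) /\ monotone (@fcomp F g m k).
Proof.
have [_ _ f_epi] := pff_epi family (D_fcomp m k).
by split=> //; exact: D_monotone (D_fcomp m k).
Qed.

Lemma bond_epi n : epimorphism (@g n).
Proof. by have [] := pff_epi family (fs_dist seqF n). Qed.

Lemma split_at_level (x y : thread g) n : lim_edge x y -> coord x n != coord y n ->
  exists M (h : fv (F M) -> fv (split_graph (coord x n) (coord y n))),
    [/\ epimorphism h, monotone h, h (coord x M) = None &
        forall z : thread g, coord z n != coord x n -> h (coord z M) = Some (coord z n)].
Proof.
move=> exy xy; have [_ Dx _] := splitting (fs_mem seqF n) xy (exy n).
have [k [h [Dh collapse_h]]] := fs_proj seqF Dx.
have [_ _ h_epi] := pff_epi family Dh.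
have h_old (z : thread g) :
    coord z n != coord x n -> h (coord z (k + n)%coq_nat) = Some (coord z n).
  move=> zx; have := collapse_h (coord z (k + n)%coq_nat); rewrite fcomp_coord.
  by case: (h _) => [u /= -> //|/= xz]; rewrite xz eqxx in zx.
exists (k + n)%coq_nat, h; split=> //; first exact: D_monotone Dh.
have : fe (h (coord x (k + n)%coq_nat)) (h (coord y (k + n)%coq_nat)).
  by apply: (epimorphism_edge h_epi); exact: exy.
rewrite (h_old y) 1?eq_sym //.
have := collapse_h (coord x (k + n)%coq_nat); rewrite fcomp_coord.
by case: (h _) => [u /= ->|//]; rewrite /= !eqxx (negbTE xy) andbF.
Qed.

Lemma lim_edge_neighbour (x y z : thread g) :
  lim_edge x y -> x <> y -> lim_edge x z -> z = x \/ z = y.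
Proof.
move=> exy xy exz; apply: contrapT => /not_orP [zx zy].
have [n [xyn [zxn zyn]]] := filter_ex (filterI (coord_neq_near xy)
  (filterI (coord_neq_near zx) (coord_neq_near zy))).
have [M [h [h_epi _ hx h_old]]] := split_at_level exy xyn.
have := epimorphism_edge h_epi (exz M); rewrite hx h_old //=.
by rewrite (negbTE zxn) (negbTE zyn).
Qed.

Lemma lim_equiv_edge_fibre (x y z : thread g) :
  lim_edge x y -> x <> y -> lim_equiv x z -> z = x \/ z = y.
Proof.
move=> exy xy.
have step a b : lim_edge a b -> a = x \/ a = y -> b = x \/ b = y.
  move=> eab [Ea|Ea]; subst a; first exact: lim_edge_neighbour.
  by case: (lim_edge_neighbour (lim_edge_sym exy) (nesym xy) eab); [right|left].
suff fibre a b : lim_equiv a b -> (a = x \/ a = y) <-> (b = x \/ b = y).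
  by move=> /fibre fibre_z; apply/fibre_z; left.
elim=> {a b} [a b eab|//|a b _ IH|a b c _ IH1 _ IH2]; try tauto.
by split; apply: step => //; exact: lim_edge_sym.
Qed.

(* The threads lying over the side of u in the split tree form a connected set
   avoiding the fibre {x, y} of realize x. *)
Lemma side_connected (x y u v : thread g) n :
  lim_edge x y -> coord x n != coord y n ->
  coord u n != coord x n -> coord v n != coord x n ->
  connect (split_e_old (coord x n) (coord y n)) (Some (coord u n)) (Some (coord v n)) ->
  ~~ connect (split_e_old (coord x n) (coord y n)) (Some (coord u n)) (Some (coord y n)) ->
  connected_component (~` [set realize x]) (realize u) (realize v).
Proof.
move=> exy xyn ux vx uv not_uy.
have xy : x <> y by move=> E; rewrite E eqxx in xyn.
have [M [h [h_epi h_mono hx h_old]]] := split_at_level exy xyn.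
pose P : {set fv (split_graph (coord x n) (coord y n))} :=
  [set s | connect (split_e_old (coord x n) (coord y n)) (Some (coord u n)) s]%SET.
have cP : fg_connected P by apply: fg_connected_connect => s t /split_e_oldW.
have cK := connected_realize_cylinder bond_epi fcomp_epi_monotone
  (fg_connected_preimage h_epi h_mono cP).
apply: (connected_component_max _ _ cK).
- by exists u; rewrite //= !inE h_old // connect0.
- move=> _ [z + <-] /= zx; rewrite /= !inE.
  have [->|->] := lim_equiv_edge_fibre exy xy (proj1 (realizeP x z) (esym zx)).
    by rewrite hx => /connect_split_e_old_None.
  by rewrite h_old 1?eq_sym // (negbTE not_uy).
- by exists v; rewrite //= !inE h_old.
Qed.

Lemma same_side_connected (x y u v : thread g) n :
  lim_edge x y -> coord x n != coord y n ->
  coord u n != coord x n -> coord u n != coord y n ->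
  coord v n != coord x n -> coord v n != coord y n ->
  connect (split_e_old (coord x n) (coord y n)) (Some (coord u n)) (Some (coord x n)) =
  connect (split_e_old (coord x n) (coord y n)) (Some (coord v n)) (Some (coord x n)) ->
  connected_component (~` [set realize x]) (realize u) (realize v).
Proof.
move=> exy xyn ux uy vx vy.
have [Tsplit _ _] := splitting (fs_mem seqF n) xyn (exy n).
have [cS acyc] := trees Tsplit.
have e_sym := sym_connect_sym (@split_e_old_sym _ (coord x n) (coord y n)).
have not_xy := split_e_old_separated acyc xyn.
case ux_side: (connect _ _ _) => /esym vx_side.
  apply: (side_connected exy xyn) => //.
    by rewrite (connect_trans ux_side) // e_sym.
  by apply: contra not_xy => /(connect_trans _); apply; rewrite e_sym.
have uy_side := split_e_old_cover cS (coord u n); rewrite ux_side /= in uy_side.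
have vy_side := split_e_old_cover cS (coord v n); rewrite vx_side /= in vy_side.
have -> : realize x = realize y by apply/realizeP; exact: rst_step.
have swap := eq_connect (@split_e_old_swap _ (coord y n) (coord x n)).
apply: (side_connected (lim_edge_sym exy) _ uy vy); rewrite 1?eq_sym // !swap ?ux_side //.
by rewrite (connect_trans uy_side) // e_sym.
Qed.

Lemma edge_fibre_not_ramification (x y : thread g) :
  lim_edge x y -> x <> y -> ~ ramification_point (realize x).
Proof.
move=> exy xy [a [b [c [[pa pb pc] [nab nac nbc]]]]].
have Rxy : realize x = realize y by apply/realizeP; exact: rst_step.
have off (u : thread g) : realize u <> realize x ->
    \forall n \near \oo, coord u n != coord x n /\ coord u n != coord y n.
  move=> ux; apply: filterI; apply: coord_neq_near => E; apply: ux; by rewrite E ?Rxy.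
have [ua ?] := realize_surj a; have [ub ?] := realize_surj b.
have [uc ?] := realize_surj c; subst a b c.
have [n [xyn [[uax uay] [[ubx uby] [ucx ucy]]]]] := filter_ex (filterI
  (coord_neq_near xy) (filterI (off ua pa) (filterI (off ub pb) (off uc pc)))).
pose side (u : thread g) :=
  connect (split_e_old (coord x n) (coord y n)) (Some (coord u n)) (Some (coord x n)).
have : [\/ side ua = side ub, side ua = side uc | side ub = side uc].
  by case: (side ua); case: (side ub); case: (side uc); constructor.
by case=> same; [apply: nab|apply: nac|apply: nbc]; apply: same_side_connected same.
Qed.

End FraisseLimit.

Theorem mainTheorem2 (T : FinGraph -> Prop)
    (D : forall B A : FinGraph, (fv B -> fv A) -> Prop)
    (F : nat -> FinGraph) (g : forall n : nat, fv (F n.+1) -> fv (F n)) :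
  proj_fraisse_family T D ->
  (forall A : FinGraph, T A -> ftree A) ->
  (forall (B A : FinGraph) (f : fv B -> fv A), D B A f -> monotone f) ->
  allows_splitting T D ->
  fraisse_seq T D g ->
  forall p : realization g, ramification_point p ->
  exists! p' : thread g, realize p' = p.
Proof.
move=> family trees D_monotone splitting seqF p p_ram.
have [x0 ?] := realize_surj p; subst p; exists x0; split=> // x1 /realizeP x1x0.
apply: contrapT => x0x1.
have [x [y [xy exy x1x]]] := lim_equiv_nontrivial_edge x1x0 (nesym x0x1).
have x0x : realize x0 = realize x.
  by apply/realizeP; apply: (rst_trans _ _ _ x1) => //; exact: rst_sym.
move: p_ram; rewrite x0x.
exact: (edge_fibre_not_ramification family trees D_monotone splitting seqF exy xy).
Qed.
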